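(* Let $\mathsf V$ be a quantale, $f:(X,a)\to(Y,b)$ a $\mathsf V$-functor and $s=(x_n)_{n\in\mathbb N}$ a Cauchy sequence in $X$; let $f(s)=(f(x_n))_{n\in\mathbb N}$. Then $\varphi_{f(s)}=f_*\cdot\varphi_s$ and $\psi_{f(s)}=\psi_s\cdot f^*$, i.e. for all $y\in Y$, $\varphi_{f(s)}(y)=\bigvee_{x\in X}\varphi_s(x)\otimes b(f(x),y)$ and $\psi_{f(s)}(y)=\bigvee_{x\in X}b(y,f(x))\otimes\psi_s(x)$.
   Context: A quantale $(\mathsf V,\otimes,k)$ is a complete anti-symmetric lattice with an associative, commutative operation $\otimes$ with neutral element $k$ distributing over arbitrary suprema. A $\mathsf V$-category $(X,a)$ is a set with $a:X\times X\to\mathsf V$ such that $k\le a(x,x)$ and $a(x,y)\otimes a(y,z)\le a(x,z)$; a $\mathsf V$-functor $f:(X,a)\to(Y,b)$ satisfies $a(x,y)\le b(f(x),f(y))$. A sequence $s=(x_n)$ in $(X,a)$ is Cauchy if $k\le\bigvee_{N}\bigwedge_{n,m\ge N}a(x_n,x_m)$; $\varphi_s(x)=\bigvee_N\bigwedge_{n\ge N}a(x_n,x)$ and $\psi_s(x)=\bigvee_N\bigwedge_{n\ge N}a(x,x_n)$ (similarly in $Y$ with $b$). *)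

Set Implicit Arguments.

Record Quantale := {
  carrier :> Type;
  qle : carrier -> carrier -> Prop;
  qle_refl : forall x, qle x x;
  qle_trans : forall x y z, qle x y -> qle y z -> qle x z;
  qle_antisym : forall x y, qle x y -> qle y x -> x = y;
  qsup : (carrier -> Prop) -> carrier;
  qsup_ub : forall (S : carrier -> Prop) x, S x -> qle x (qsup S);
  qsup_least : forall (S : carrier -> Prop) y,
      (forall x, S x -> qle x y) -> qle (qsup S) y;
  qtens : carrier -> carrier -> carrier;
  qk : carrier;
  qtens_assoc : forall x y z, qtens x (qtens y z) = qtens (qtens x y) z;
  qtens_comm : forall x y, qtens x y = qtens y x;
  qtens_k : forall x, qtens x qk = x;
  qtens_sup : forall x (S : carrier -> Prop),
      qtens x (qsup S) = qsup (fun z => exists y, S y /\ z = qtens x y)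
}.

Arguments qle {q}. Arguments qsup {q}. Arguments qtens {q}. Arguments qk {q}.

Section Defs.
Context {V : Quantale}.

Definition qSup (I : Type) (f : I -> V) : V := qsup (fun z => exists i, z = f i).
Definition qinf (S : V -> Prop) : V := qsup (fun z => forall x, S x -> qle z x).
Definition qInf (I : Type) (f : I -> V) : V := qinf (fun z => exists i, z = f i).

Definition is_Vcat (X : Type) (a : X -> X -> V) : Prop :=
  (forall x, qle qk (a x x)) /\
  (forall x y z, qle (qtens (a x y) (a y z)) (a x z)).

Definition is_Vfunctor (X Y : Type) (a : X -> X -> V) (b : Y -> Y -> V)
  (f : X -> Y) : Prop := forall x y, qle (a x y) (b (f x) (f y)).

Definition is_Cauchy (X : Type) (a : X -> X -> V) (s : nat -> X) : Prop :=
  qle qk (qSup (fun N : nat =>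
     qInf (fun nm : {p : nat * nat | N <= fst p /\ N <= snd p} =>
              a (s (fst (proj1_sig nm))) (s (snd (proj1_sig nm)))))).

Definition phi_seq (X : Type) (a : X -> X -> V) (s : nat -> X) (x : X) : V :=
  qSup (fun N : nat => qInf (fun n : {n : nat | N <= n} => a (s (proj1_sig n)) x)).

Definition psi_seq (X : Type) (a : X -> X -> V) (s : nat -> X) (x : X) : V :=
  qSup (fun N : nat => qInf (fun n : {n : nat | N <= n} => a x (s (proj1_sig n)))).

End Defs.

(* The inequality sup_x phi_s(x) ⊗ b(f x, y) <= phi_{f(s)}(y) holds for any sequence: each term
   is bounded, through an index n of the tail, by a(x_n, x) ⊗ b(f x, y) <= b(f x_n, y).
   For the converse the Cauchy condition is used as k <= sup_M inf_{n,m >= M} a(x_n, x_m):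
   tensoring phi_{f(s)}(y) with it, every tail infimum of a(x_n, x_m) is below phi_s(x_p) at
   a late index p, and every tail infimum of b(f x_n, y) is below b(f x_p, y), so the product is
   below the term of the supremum at x = x_p.  The statement for psi is the statement for phi
   in the opposite V-categories. *)
From Stdlib Require Import Arith Lia.

Section QuantaleOrder.
Context {V : Quantale}.

(* Monotonicity of the tensor is not an axiom: it is distributivity over the join y ∨ z = z. *)
Lemma qtens_monor (x y z : V) : qle y z -> qle (qtens x y) (qtens x z).
Proof.
  intro Hyz.
  assert (Ejoin : qsup (fun w => w = y \/ w = z) = z).
  { apply qle_antisym.
    - apply qsup_least. intros w [-> | ->]; [exact Hyz | apply qle_refl].
    - apply qsup_ub. now right. }
  rewrite <- Ejoin, qtens_sup.
  apply qsup_ub. exists y. auto.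
Qed.

Lemma qtens_mono (x x' y y' : V) :
  qle x x' -> qle y y' -> qle (qtens x y) (qtens x' y').
Proof.
  intros Hx Hy. apply qle_trans with (qtens x y').
  - now apply qtens_monor.
  - rewrite (qtens_comm _ x), (qtens_comm _ x'). now apply qtens_monor.
Qed.

Lemma qSup_ub (I : Type) (f : I -> V) i : qle (f i) (qSup f).
Proof. apply qsup_ub. now exists i. Qed.

Lemma qSup_least (I : Type) (f : I -> V) w :
  (forall i, qle (f i) w) -> qle (qSup f) w.
Proof. intro Hf. apply qsup_least. intros x [i ->]. apply Hf. Qed.

Lemma qInf_lb (I : Type) (f : I -> V) i : qle (qInf f) (f i).
Proof. apply qsup_least. intros z Hz. apply Hz. now exists i. Qed.

Lemma qInf_greatest (I : Type) (f : I -> V) w :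
  (forall i, qle w (f i)) -> qle w (qInf f).
Proof. intro Hf. apply qsup_ub. intros x [i ->]. apply Hf. Qed.

Lemma qSup_mono (I : Type) (f g : I -> V) :
  (forall i, qle (f i) (g i)) -> qle (qSup f) (qSup g).
Proof.
  intro Hfg. apply qSup_least. intro i.
  apply qle_trans with (g i); [apply Hfg | apply qSup_ub].
Qed.

Lemma eq_qSup (I : Type) (f g : I -> V) : (forall i, f i = g i) -> qSup f = qSup g.
Proof.
  intro Efg. apply qle_antisym; apply qSup_mono; intro i; rewrite Efg; apply qle_refl.
Qed.

Lemma qtens_qSup_le (I : Type) (f : I -> V) z w :
  (forall i, qle (qtens z (f i)) w) -> qle (qtens z (qSup f)) w.
Proof.
  intro Hf. unfold qSup. rewrite qtens_sup. apply qsup_least.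
  intros x [y [[i ->] ->]]. apply Hf.
Qed.

Lemma qSup_qtens_le (I : Type) (f : I -> V) z w :
  (forall i, qle (qtens (f i) z) w) -> qle (qtens (qSup f) z) w.
Proof.
  intro Hf. rewrite qtens_comm. apply qtens_qSup_le.
  intro i. rewrite qtens_comm. apply Hf.
Qed.

End QuantaleOrder.

Section Duality.
Context {V : Quantale} {X Y : Type}.

Lemma is_Vcat_op (a : X -> X -> V) : is_Vcat a -> is_Vcat (fun x y => a y x).
Proof.
  intros [a_refl a_trans]. split; [exact a_refl |].
  intros x y z. rewrite qtens_comm. apply a_trans.
Qed.

Lemma is_Vfunctor_op (a : X -> X -> V) (b : Y -> Y -> V) (f : X -> Y) :
  is_Vfunctor a b f -> is_Vfunctor (fun x y => a y x) (fun x y => b y x) f.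
Proof. intros Hf x y. apply Hf. Qed.

Lemma is_Cauchy_op (a : X -> X -> V) (s : nat -> X) :
  is_Cauchy a s -> is_Cauchy (fun x y => a y x) s.
Proof.
  intro Hs. eapply qle_trans; [exact Hs |].
  apply qSup_mono. intro N. apply qInf_greatest. intros [[n m] [Hn Hm]].
  exact (qInf_lb _ _ (exist _ (m, n) (conj Hm Hn))).
Qed.

End Duality.

Section CauchyTail.
Context {V : Quantale} {X : Type} (a : X -> X -> V) (s : nat -> X).

Definition cauchy_tail (N : nat) : V :=
  qInf (fun nm : {p : nat * nat | N <= fst p /\ N <= snd p} =>
          a (s (fst (proj1_sig nm))) (s (snd (proj1_sig nm)))).

Lemma is_CauchyE : is_Cauchy a s -> qle qk (qSup cauchy_tail).
Proof. easy. Qed.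

Lemma cauchy_tail_le_phi_seq (N p : nat) :
  N <= p -> qle (cauchy_tail N) (phi_seq a s (s p)).
Proof.
  intro HNp. eapply qle_trans; [| apply (qSup_ub _ _ N)].
  apply qInf_greatest. intros [n Hn].
  exact (qInf_lb _ _ (exist _ (n, p) (conj Hn HNp))).
Qed.

End CauchyTail.

Section ImageSequence.
Context {V : Quantale} {X Y : Type} (a : X -> X -> V) (b : Y -> Y -> V).
Context (f : X -> Y) (s : nat -> X).
Hypothesis b_Vcat : is_Vcat b.
Hypothesis f_Vfunctor : is_Vfunctor a b f.

Lemma phi_seq_image_ge (y : Y) :
  qle (qSup (fun x => qtens (phi_seq a s x) (b (f x) y)))
      (phi_seq b (fun n => f (s n)) y).
Proof.
  destruct b_Vcat as [_ b_trans].
  apply qSup_least. intro x. apply qSup_qtens_le. intro N.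
  eapply qle_trans; [| apply (qSup_ub _ _ N)].
  apply qInf_greatest. intros [n Hn]. simpl.
  eapply qle_trans; [apply qtens_mono; [apply (qInf_lb _ _ (exist _ n Hn)) | apply qle_refl] |].
  eapply qle_trans; [apply qtens_mono; [apply f_Vfunctor | apply qle_refl] |].
  apply b_trans.
Qed.

Hypothesis s_Cauchy : is_Cauchy a s.

Lemma phi_seq_image_le (y : Y) :
  qle (phi_seq b (fun n => f (s n)) y)
      (qSup (fun x => qtens (phi_seq a s x) (b (f x) y))).
Proof.
  rewrite <- (qtens_k _ (phi_seq _ _ y)).
  eapply qle_trans; [apply qtens_monor, (is_CauchyE _ _ s_Cauchy) |].
  apply qtens_qSup_le. intro M. rewrite qtens_comm.
  apply qtens_qSup_le. intro N.
  eapply qle_trans; [| apply (qSup_ub _ _ (s (max N M)))].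
  apply qtens_mono.
  - apply cauchy_tail_le_phi_seq. lia.
  - exact (qInf_lb _ _ (exist _ (max N M) (Nat.le_max_l N M))).
Qed.

Lemma phi_seq_image (y : Y) :
  phi_seq b (fun n => f (s n)) y = qSup (fun x => qtens (phi_seq a s x) (b (f x) y)).
Proof. apply qle_antisym; [apply phi_seq_image_le | apply phi_seq_image_ge]. Qed.

End ImageSequence.

Theorem lemma3p14 (V : Quantale) (X Y : Type) (a : X -> X -> V) (b : Y -> Y -> V)
  (f : X -> Y) (s : nat -> X) :
  is_Vcat a -> is_Vcat b -> is_Vfunctor a b f -> is_Cauchy a s ->
  (forall y : Y,
     phi_seq b (fun n => f (s n)) y = qSup (fun x : X => qtens (phi_seq a s x) (b (f x) y))) /\
  (forall y : Y,
     psi_seq b (fun n => f (s n)) y = qSup (fun x : X => qtens (b y (f x)) (psi_seq a s x))).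
Proof.
  intros _ b_Vcat f_Vfunctor s_Cauchy. split; intro y.
  - now apply phi_seq_image.
  - change (psi_seq b (fun n => f (s n)) y)
      with (phi_seq (fun u v => b v u) (fun n => f (s n)) y).
    rewrite (phi_seq_image (fun u v => a v u)); auto using is_Vcat_op, is_Vfunctor_op, is_Cauchy_op.
    apply eq_qSup. intro x. apply qtens_comm.
Qed.
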